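(* Let $s\ge r\ge2$, let $Q$ be an $s$-vertex $r$-graph and let $\mathcal P$ be a $Q$-flat hereditary property of $r$-graphs. Then for every $p\ge1$ and every $H\in\mathcal P$ with at least $s$ vertices, $$\lambda^{(p)}(Q,H)\le\pi(Q,\mathcal P)^{1/p}\big(s!\,\mathcal N(Q,H)\big)^{1-1/p}.$$
   Context: An $r$-graph ($r\ge 2$) is a finite hypergraph all of whose edges have exactly $r$ vertices. For $I\subseteq V(H)$, $H[I]$ denotes the induced subhypergraph on $I$. For an $s$-vertex $r$-graph $Q$ and an $r$-graph $H$, $\mathcal N(Q,H)$ is the number of (not necessarily induced) subgraphs of $H$ isomorphic to $Q$. For an $n$-vertex $r$-graph $H$ with vertex set $[n]$ and $\mathbf x\in\mathbb R^n$, $P_{Q,H}(\mathbf x)=s!\sum_{\{i_1,\dots,i_s\}\in\binom{[n]}{s}}\mathcal N(Q,H[\{i_1,\dots,i_s\}])\,x_{i_1}\cdots x_{i_s}$, and for $p\ge1$, $\lambda^{(p)}(Q,H)=\max_{\|\mathbf x\|_p=1}P_{Q,H}(\mathbf x)$. A hereditary property $\mathcal P$ of $r$-graphs is a family of $r$-graphs closed under isomorphism and under taking induced subgraphs; as a standing assumption, whenever $H\in\mathcal P$, the disjoint union of $H$ with an isolated vertex is also in $\mathcal P$. $\mathcal P_n$ is the set of members of $\mathcal P$ with $n$ vertices. $ex(Q,\mathcal P_n)=\max\{\mathcal N(Q,H):H\in\mathcal P_n\}$ and $\pi(Q,\mathcal P)=\lim_{n\to\infty}ex(Q,\mathcal P_n)/\binom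 ns$ (this limit exists). $\lambda^{(p)}(Q,\mathcal P_n)=\max\{\lambda^{(p)}(Q,H):H\in\mathcal P_n\}$ and $\lambda^{(p)}(Q,\mathcal P)=\lim_{n\to\infty}\lambda^{(p)}(Q,\mathcal P_n)n^{s/p-s}$ (this limit exists). $\mathcal P$ is $Q$-flat if $\lambda^{(1)}(Q,\mathcal P)=\pi(Q,\mathcal P)$. *)

From HB Require Import structures.
From mathcomp Require Import all_boot all_order all_algebra.
From mathcomp Require Import all_classical all_reals all_analysis.
Set Implicit Arguments. Unset Strict Implicit. Unset Printing Implicit Defensive.
Import Order.TTheory GRing.Theory Num.Theory numFieldNormedType.Exports.
Local Open Scope ring_scope.

(* An r-graph on vertex set [n] = 'I_n is given by its edge set. *)
Definition uniform (r n : nat) (E : {set {set 'I_n}}) : Prop :=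
  forall e, e \in E -> #|e| = r.

(* The induced subgraph on the image of an injection f : [m] -> [n],
   relabelled onto [m]. *)
Definition pullback (m n : nat) (f : 'I_m -> 'I_n) (E : {set {set 'I_n}})
  : {set {set 'I_m}} := [set e : {set 'I_m} | f @: e \in E].

(* Disjoint union with an isolated vertex (the new vertex is n). *)
Definition add_isolated (n : nat) (E : {set {set 'I_n}}) : {set {set 'I_n.+1}} :=
  [set (widen_ord (leqnSn n)) @: (e : {set 'I_n}) | e in E].

Definition property := forall n : nat, {set {set 'I_n}} -> Prop.

(* Hereditary property of r-graphs (closed under isomorphism and induced
   subgraphs, both captured by pullbacks along injections), containing only
   r-graphs, and closed under adding an isolated vertex (standing assumption). *)
Definition hereditary (r : nat) (P : property) : Prop :=
  [/\ forall n E, P n E -> uniform r E,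
      forall m n (f : 'I_m -> 'I_n) E, injective f -> P n E -> P m (pullback f E)
    & forall n E, P n E -> P n.+1 (add_isolated E)].

Definition induced (n : nat) (E : {set {set 'I_n}}) (I : {set 'I_n}) :=
  [set e in E | e \subset I].

(* Number of (not necessarily induced) subgraphs (V', E') of the hypergraph
   with vertex set I and edge set E that are isomorphic to Q = ([s], EQ). *)
Definition Ncount (s : nat) (EQ : {set {set 'I_s}}) (n : nat)
  (I : {set 'I_n}) (E : {set {set 'I_n}}) : nat :=
  #|[set x : {set 'I_n} * {set {set 'I_n}} |
      [&& x.1 \subset I, x.2 \subset E &
       [exists f : {ffun 'I_s -> 'I_n},
          [&& injectiveb f, f @: setT == x.1 & [set f @: (e : {set 'I_s}) | e in EQ] == x.2]]]]|.

Definition NQ (s : nat) (EQ : {set {set 'I_s}}) (n : nat) (E : {set {set 'I_n}}) :=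
  Ncount EQ [set: 'I_n]%SET E.

Local Open Scope classical_set_scope.

Definition PQH {R : realType} (s : nat) (EQ : {set {set 'I_s}}) (n : nat)
  (E : {set {set 'I_n}}) (x : 'I_n -> R) : R :=
  (s`!)%:R * \sum_(I : {set 'I_n} | #|I| == s)
               (Ncount EQ I (induced E I))%:R * \prod_(i in I) x i.

Definition pnorm {R : realType} (n : nat) (p : R) (x : 'I_n -> R) : R :=
  (\sum_(i < n) `|x i| `^ p) `^ p^-1.

Definition lamH {R : realType} (s : nat) (EQ : {set {set 'I_s}}) (p : R)
  (n : nat) (E : {set {set 'I_n}}) : R :=
  sup [set PQH EQ E x | x in [set x : 'I_n -> R | pnorm p x = 1]].

Definition exQ {R : realType} (s : nat) (EQ : {set {set 'I_s}}) (P : property)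
  (n : nat) : R :=
  sup [set ((NQ EQ E)%:R : R) | E in [set E | P n E]].

Definition piQ {R : realType} (s : nat) (EQ : {set {set 'I_s}}) (P : property) : R :=
  limn (fun n : nat => exQ (R:=R) EQ P n / ('C(n, s))%:R).

Definition lamPn {R : realType} (s : nat) (EQ : {set {set 'I_s}}) (P : property)
  (p : R) (n : nat) : R :=
  sup [set lamH EQ p E | E in [set E | P n E]].

Definition lamP {R : realType} (s : nat) (EQ : {set {set 'I_s}}) (P : property)
  (p : R) : R :=
  limn (fun n : nat => lamPn EQ P p n * (n%:R) `^ (s%:R / p - s%:R)).

Definition flat {R : realType} (s : nat) (EQ : {set {set 'I_s}}) (P : property) : Prop :=
  lamP (R:=R) EQ P 1 = piQ (R:=R) EQ P.

From Pilot Require Import Defs.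
From HB Require Import structures.
From mathcomp Require Import all_boot all_order all_algebra.
From mathcomp Require Import all_classical all_reals all_analysis.
From mathcomp Require Import ring.
Import Defs.
Set Implicit Arguments. Unset Strict Implicit. Unset Printing Implicit Defensive.
Import Order.TTheory GRing.Theory Num.Theory numFieldNormedType.Exports.
Local Open Scope ring_scope.

(* Let ||x||_p = 1 and y_i = |x_i|^p, so that ||y||_1 = 1.  Then
   P_{Q,H}(|x|) = sum_I c_I (prod_{i in I} y_i)^(1/p) with c_I = s! N(Q, H[I]), and
   Hoelder's inequality (Jensen's, for the concave map t |-> t^(1/p)) bounds it by
   P_{Q,H}(y)^(1/p) (sum_I c_I)^(1 - 1/p).  Counting copies of Q by their vertex sets
   gives sum_I c_I <= s! N(Q, H).  Finally P_{Q,H}(y) <= lambda^(1)(Q, H), and since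
   adding an isolated vertex does not decrease lambda^(1), the sequence
   lambda^(1)(Q, P_n) is nondecreasing and bounded by s!; its limit, which is
   pi(Q, P) by flatness, therefore dominates lambda^(1)(Q, H). *)

Section Copies.
Variables (s : nat) (EQ : {set {set 'I_s}}).

Definition copies n (I : {set 'I_n}) (E : {set {set 'I_n}}) :=
  [set x : {set 'I_n} * {set {set 'I_n}} |
      [&& x.1 \subset I, x.2 \subset E &
       [exists f : {ffun 'I_s -> 'I_n},
          [&& injectiveb f, f @: setT == x.1 &
              [set f @: (e : {set 'I_s}) | e in EQ] == x.2]]]].

Lemma NcountE n (I : {set 'I_n}) E : Ncount EQ I E = #|copies I E|.
Proof. by []. Qed.

Lemma card_imsetT_injective n (f : {ffun 'I_s -> 'I_n}) :
  injectiveb f -> #|f @: setT| = s.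
Proof.
move/injectiveP=> f_inj; rewrite card_imset // -[RHS](card_ord s).
by apply: eq_card => k; rewrite in_setT inE.
Qed.

Lemma card_copy_vertices n (I : {set 'I_n}) E x : x \in copies I E -> #|x.1| = s.
Proof.
by rewrite inE => /and3P[_ _ /existsP[f /and3P[f_inj /eqP <- _]]]; rewrite card_imsetT_injective.
Qed.

Lemma copy_vertices_eq n (I : {set 'I_n}) E x :
  #|I| = s -> x \in copies I E -> x.1 = I.
Proof.
move=> cardI xC; apply/eqP; rewrite eqEcard cardI (card_copy_vertices xC) leqnn andbT.
by move: xC; rewrite inE => /and3P[].
Qed.

Definition injections_onto n (I : {set 'I_n}) :=
  [set f : {ffun 'I_s -> 'I_n} | injectiveb f && (f @: setT == I)].

Lemma Ncount_le_injections n (I : {set 'I_n}) E :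
  #|I| = s -> (Ncount EQ I E <= #|injections_onto I|)%N.
Proof.
move=> cardI; rewrite NcountE.
pose copy_of (f : {ffun 'I_s -> 'I_n}) :=
  (f @: setT, [set f @: (e : {set 'I_s}) | e in EQ]).
apply: leq_trans (leq_imset_card copy_of _); apply: subset_leq_card.
apply/fintype.subsetP => x xC; have x1 := copy_vertices_eq cardI xC.
move: xC; rewrite inE => /and3P[_ _ /existsP[f /and3P[f_inj /eqP f1 /eqP f2]]].
apply/imsetP; exists f; first by rewrite inE f_inj f1 x1 eqxx.
by rewrite /copy_of f1 f2; case: x {x1 f1 f2}.
Qed.

Lemma sum_Ncount_induced_le n (E : {set {set 'I_n}}) :
  (\sum_(I : {set 'I_n} | #|I| == s) Ncount EQ I (induced E I) <= NQ EQ E)%N.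
Proof.
rewrite /NQ NcountE -sum1_card (partition_big (fun x => x.1) predT) //=.
rewrite [X in (_ <= X)%N](bigID (fun I : {set 'I_n} => #|I| == s)) /=.
apply: leq_trans _ (leq_addr _ _); apply: leq_sum => I /eqP cardI.
rewrite NcountE sum1dep_card; apply: subset_leq_card; apply/fintype.subsetP => x xC.
rewrite inE (copy_vertices_eq cardI xC) eqxx andbT.
move: xC; rewrite !inE => /and3P[_ x2 ->]; rewrite finset.subsetT (fintype.subset_trans x2) //.
by apply/fintype.subsetP => e; rewrite inE => /andP[].
Qed.

Lemma Ncount_imset n m (g : 'I_n -> 'I_m) (E : {set {set 'I_n}}) (J : {set 'I_n}) :
  injective g ->
  (Ncount EQ J (induced E J) <=
   Ncount EQ (g @: J) (induced [set g @: (e : {set 'I_n}) | e in E] (g @: J)))%N.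
Proof.
move=> g_inj; rewrite !NcountE.
pose relabel (x : {set 'I_n} * {set {set 'I_n}}) :=
  (g @: x.1, [set g @: (e : {set 'I_n}) | e in x.2]).
have relabel_inj : injective relabel.
  by move=> [a1 a2] [b1 b2] [/(imset_inj g_inj) -> /(imset_inj (imset_inj g_inj)) ->].
rewrite -(card_imset _ relabel_inj); apply: subset_leq_card.
apply/fintype.subsetP => _ /imsetP[x xC ->].
move: xC; rewrite !inE => /and3P[x1 x2 /existsP[f /and3P[f_inj /eqP f1 /eqP f2]]].
apply/and3P; split.
- exact: imsetS.
- apply/fintype.subsetP => _ /imsetP[e ex ->].
  move/fintype.subsetP: x2 => /(_ e ex); rewrite !inE => /andP[eE eJ].
  by rewrite imset_f // imsetS.
apply/existsP; exists [ffun k => g (f k)]; apply/and3P; split.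
- by apply/injectiveP => a b; rewrite !ffunE => /g_inj /(injectiveP _ f_inj).
- by rewrite /= -f1 -imset_comp; apply/eqP/eq_imset => k; rewrite ffunE.
rewrite /= -f2 -imset_comp; apply/eqP/eq_imset => e /=.
by rewrite -imset_comp; apply: eq_imset => k; rewrite ffunE.
Qed.

End Copies.

Section PolynomialBounds.
Variables (R : realType) (s : nat) (EQ : {set {set 'I_s}}).

Lemma PQH_le_norm n (E : {set {set 'I_n}}) (x : 'I_n -> R) :
  PQH EQ E x <= PQH EQ E (fun i => `|x i|).
Proof.
rewrite /PQH; apply: ler_wpM2l => //; apply: ler_sum => I _.
by apply: ler_wpM2l => //; rewrite -normr_prod ler_norm.
Qed.

Lemma sum_prod_injections_onto n (I : {set 'I_n}) (y : 'I_n -> R) :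
  \sum_(f in injections_onto s I) \prod_(k < s) y (f k)
    = #|injections_onto s I|%:R * \prod_(i in I) y i.
Proof.
rewrite mulr_natl -sumr_const; apply: eq_bigr => f.
rewrite inE => /andP[/injectiveP f_inj /eqP <-].
rewrite big_imset /=; last by move=> a b _ _ /f_inj.
by apply: eq_bigl => k; rewrite in_setT.
Qed.

Lemma sum_injections_onto_le n (F : {ffun 'I_s -> 'I_n} -> R) :
  (forall f, 0 <= F f) ->
  \sum_(I : {set 'I_n} | #|I| == s) \sum_(f in injections_onto s I) F f <= \sum_f F f.
Proof.
move=> F_ge0; under eq_bigr => I _ do rewrite big_mkcond /=.
rewrite exchange_big /=; apply: ler_sum => f _.
have [f_inj|f_ninj] := boolP (injectiveb f); last first.
  by rewrite big1 // => I _; rewrite inE (negbTE f_ninj).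
rewrite (bigD1 (f @: setT)) /= ?card_imsetT_injective //.
rewrite inE f_inj eqxx big1 ?addr0 // => I /andP[_ nI].
by rewrite inE f_inj eq_sym (negbTE nI).
Qed.

(* Every copy of Q on an s-set I is the image of Q under an injection onto I, so the
   weighted count is dominated by the multinomial expansion of (sum_i y_i)^s. *)
Lemma sum_Ncount_prod_le n (E : {set {set 'I_n}}) (y : 'I_n -> R) :
  (forall i, 0 <= y i) ->
  \sum_(I : {set 'I_n} | #|I| == s) (Ncount EQ I (induced E I))%:R * \prod_(i in I) y i
    <= (\sum_i y i) ^+ s.
Proof.
move=> y_ge0; pose F (f : {ffun 'I_s -> 'I_n}) := \prod_(k < s) y (f k).
have -> : (\sum_i y i) ^+ s = \sum_f F f.
  by rewrite -(bigA_distr_bigA (fun _ j => y j)) /= prodr_const card_ord.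
apply: le_trans (@sum_injections_onto_le n F _); last by move=> f; rewrite prodr_ge0.
apply: ler_sum => I /eqP cardI; rewrite sum_prod_injections_onto.
by rewrite ler_wpM2r ?prodr_ge0 // ler_nat Ncount_le_injections.
Qed.

Lemma pnorm1 n (x : 'I_n -> R) : pnorm 1 x = \sum_i `|x i|.
Proof.
rewrite /pnorm invr1 powRr1; last by apply: sumr_ge0 => i _; apply: powR_ge0.
by apply: eq_bigr => i _; rewrite powRr1.
Qed.

Lemma PQH_le_fact n (E : {set {set 'I_n}}) (x : 'I_n -> R) :
  pnorm 1 x = 1 -> PQH EQ E x <= s`!%:R.
Proof.
rewrite pnorm1 => x1; apply: le_trans (PQH_le_norm _ _) _.
rewrite /PQH -[leRHS]mulr1 ler_wpM2l //.
by have := sum_Ncount_prod_le E (fun i => normr_ge0 (x i)); rewrite x1 expr1n.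
Qed.

Lemma PQH_imset n m (g : 'I_n -> 'I_m) (E : {set {set 'I_n}})
    (x : 'I_n -> R) (y : 'I_m -> R) :
  injective g -> (forall i, 0 <= y i) -> (forall i, y (g i) = `|x i|) ->
  PQH EQ E x <= PQH EQ [set g @: (e : {set 'I_n}) | e in E] y.
Proof.
move=> g_inj y_ge0 yg; apply: le_trans (PQH_le_norm _ _) _.
rewrite /PQH; apply: ler_wpM2l => //.
set F := [set g @: (e : {set 'I_n}) | e in E].
pose b I := (Ncount EQ I (induced F I))%:R * \prod_(i in I) y i.
have b_ge0 I : 0 <= b I by rewrite mulr_ge0 ?prodr_ge0.
apply: (@le_trans _ _ (\sum_(J : {set 'I_n} | #|J| == s) b (g @: J))).
  apply: ler_sum => J _; apply: ler_pM; rewrite ?prodr_ge0 //.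
    by rewrite ler_nat Ncount_imset.
  rewrite big_imset /=; last by move=> a c _ _ /g_inj.
  by rewrite (eq_bigr _ (fun i _ => yg i)).
rewrite (eq_bigl (fun J => J \in [set J : {set 'I_n} | #|J| == s])); last by move=> J; rewrite inE.
rewrite -(big_imset b (in2W (imset_inj g_inj))) /=.
rewrite [leLHS]big_mkcond [leRHS]big_mkcond /=; apply: ler_sum => I _.
case: ifP => [/imsetP[J]|_]; last by case: ifP => // _; apply: b_ge0.
by rewrite inE => /eqP cardJ ->; rewrite card_imset // cardJ eqxx.
Qed.

End PolynomialBounds.

Section Lagrangians.
Variables (R : realType) (s : nat) (EQ : {set {set 'I_s}}).
Local Open Scope classical_set_scope.

Lemma ge0_ge_sup (S : set R) b : 0 <= b -> ubound S b -> sup S <= b.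
Proof.
move=> b_ge0 Sb; have [->|S_neq0] := eqVneq S set0; first by rewrite sup0.
by apply: ge_sup => //; apply/set0P.
Qed.

Lemma pnorm_delta n (i0 : 'I_n) (p : R) : 0 < p -> pnorm p (fun i => (i == i0)%:R) = 1.
Proof.
move=> p_gt0; rewrite /pnorm (bigD1 i0) //= eqxx normr1 powR1 big1 ?addr0 ?powR1 //.
by move=> i /negbTE ->; rewrite normr0 powR0 // gt_eqF.
Qed.

Lemma lamH_set_neq0 n (E : {set {set 'I_n}}) (p : R) : (0 < n)%N -> 0 < p ->
  [set PQH EQ E x | x in [set x : 'I_n -> R | pnorm p x = 1]] !=set0.
Proof.
move=> n_gt0 p_gt0; pose x i := (i == Ordinal n_gt0)%:R : R.
by exists (PQH EQ E x), x => //=; apply: pnorm_delta.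
Qed.

Lemma lamH1_le_fact n (E : {set {set 'I_n}}) : lamH (R:=R) EQ 1 E <= s`!%:R.
Proof. by apply: ge0_ge_sup => // _ [x /= x1 <-]; apply: PQH_le_fact. Qed.

Lemma PQH_le_lamH1 n (E : {set {set 'I_n}}) (x : 'I_n -> R) :
  pnorm 1 x = 1 -> PQH EQ E x <= lamH (R:=R) EQ 1 E.
Proof.
move=> x1; apply: ub_le_sup; last by exists x.
by exists s`!%:R => _ [y /= y1 <-]; apply: PQH_le_fact.
Qed.

Lemma lamH1_add_isolated n (E : {set {set 'I_n}}) : (0 < n)%N ->
  lamH (R:=R) EQ 1 E <= lamH (R:=R) EQ 1 (add_isolated E).
Proof.
move=> n_gt0; apply: ge_sup; first exact: lamH_set_neq0.
move=> _ [x /= x1 <-].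
pose y (i : 'I_n.+1) : R := if insub (val i) is Some j then `|x j| else 0.
have y_widen j : y (widen_ord (leqnSn n) j) = `|x j| by rewrite /y /= valK.
apply: (@le_trans _ _ (PQH EQ (add_isolated E) y)).
  apply: PQH_imset y_widen; first by move=> a b /(congr1 val) /= /val_inj.
  by move=> i; rewrite /y; case: insub.
apply: PQH_le_lamH1.
rewrite pnorm1 big_ord_recr /= /y insubF ?ltnn // normr0 addr0 -x1 pnorm1.
by apply: eq_bigr => i _; rewrite /= valK normr_id.
Qed.

Section HereditaryProperty.
Variable P : property.
Arguments P : clear implicits.
Hypothesis P_add_isolated :
  forall n (E : {set {set 'I_n}}), P n E -> P n.+1 (add_isolated E).

Lemma lamPn1_le_fact n : lamPn (R:=R) EQ P 1 n <= s`!%:R.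
Proof. by apply: ge0_ge_sup => // _ [E _ <-]; apply: lamH1_le_fact. Qed.

Lemma lamH1_le_lamPn1 n (E : {set {set 'I_n}}) :
  P n E -> lamH (R:=R) EQ 1 E <= lamPn (R:=R) EQ P 1 n.
Proof.
move=> PE; apply: ub_le_sup; last by exists E.
by exists s`!%:R => _ [F _ <-]; apply: lamH1_le_fact.
Qed.

Lemma lamPn1_le_succ n : (0 < n)%N -> (exists E, P n E) ->
  lamPn (R:=R) EQ P 1 n <= lamPn (R:=R) EQ P 1 n.+1.
Proof.
move=> n_gt0 [E PE]; apply: ge_sup; first by exists (lamH (R:=R) EQ 1 E), E.
move=> _ [F PF <-]; apply: le_trans (lamH1_add_isolated _ n_gt0) _.
exact/lamH1_le_lamPn1/P_add_isolated.
Qed.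

(* For p = 1 the normalising factor n^(s/p - s) in lamP is 1; from level n on, P is
   nonempty, so lamPn is nondecreasing and bounded by s! and its limit is its supremum. *)
Lemma lamH1_le_lamP1 n (E : {set {set 'I_n}}) : (0 < n)%N -> P n E ->
  lamH (R:=R) EQ 1 E <= lamP (R:=R) EQ P 1.
Proof.
move=> n_gt0 PE; rewrite /lamP.
under eq_fun => k do rewrite divr1 subrr powRr0 mulr1.
pose v k := lamPn (R:=R) EQ P 1 (k + n).
have Pv k : exists F, P (k + n)%N F.
  by elim: k => [|k [F PF]]; [exists E | exists (add_isolated F); apply: P_add_isolated].
have v_nd : nondecreasing_seq v.
  apply/nondecreasing_seqP => k; rewrite /v addSn; apply: lamPn1_le_succ => //.
  by rewrite addn_gt0 n_gt0 orbT.
have v_ub : has_ubound (range v) by exists s`!%:R => _ [k _ <-]; apply: lamPn1_le_fact.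
have v_cvg : lamPn (R:=R) EQ P 1 @ \oo --> sup (range v).
  by rewrite -(cvg_shiftn n); apply: nondecreasing_cvgn.
rewrite (cvg_lim _ v_cvg) //; apply: le_trans (lamH1_le_lamPn1 PE) _.
by rewrite -[n]add0n; apply: ub_le_sup => //; exists 0%N.
Qed.

End HereditaryProperty.
End Lagrangians.

Section ConcavePower.
Variable R : realType.

Lemma powR_le_tangent1 (t q : R) : 0 <= t -> 0 < q <= 1 -> t `^ q <= q * t + (1 - q).
Proof.
move=> t_ge0 /andP[q_gt0]; rewrite le_eqVlt => /predU1P[->|q_lt1].
  by rewrite powRr1 // mul1r subrr addr0.
have := @conjugate_powR R (t `^ q) 1 q^-1 (1 - q)^-1 (powR_ge0 _ _) ler01.
rewrite !invr_gt0 q_gt0 subr_gt0 q_lt1 !invrK addrC subrK => /(_ isT isT erefl).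
by rewrite mulr1 -powRrM mulfV ?gt_eqF // powRr1 // powR1 mul1r mulrC.
Qed.

Lemma prod_powR (I : Type) (r : seq I) (D : pred I) (f : I -> R) (q : R) :
  (forall i, 0 <= f i) ->
  \prod_(i <- r | D i) f i `^ q = (\prod_(i <- r | D i) f i) `^ q.
Proof.
move=> f_ge0; apply: (@proj1 _ (0 <= \prod_(i <- r | D i) f i)).
apply: (big_rec2 (fun a b => a = b `^ q /\ 0 <= b)); first by rewrite powR1.
by move=> i a b _ [-> b_ge0]; rewrite powRM // mulr_ge0.
Qed.

(* Jensen's inequality for the concave map t |-> t^q, in homogeneous form: each term
   is compared with the tangent line at the weighted mean A / C. *)
Lemma sum_powR_le (I : finType) (D : pred I) (c w : I -> R) (q : R) :
  0 < q <= 1 -> (forall i, 0 <= c i) -> (forall i, 0 <= w i) ->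
  \sum_(i | D i) c i * w i `^ q <=
  (\sum_(i | D i) c i * w i) `^ q * (\sum_(i | D i) c i) `^ (1 - q).
Proof.
move=> q01 c_ge0 w_ge0; have /andP[q_gt0 _] := q01.
set A := \sum_(i | D i) c i * w i; set C := \sum_(i | D i) c i.
have cw_ge0 i : 0 <= c i * w i by rewrite mulr_ge0.
have : 0 <= C by rewrite sumr_ge0.
rewrite le_eqVlt => /predU1P[/esym C0|C_gt0].
  rewrite big1 ?mulr_ge0 ?powR_ge0 // => i Di.
  by rewrite (psumr_eq0P (fun i _ => c_ge0 i) C0) ?mul0r.
have : 0 <= A by rewrite sumr_ge0.
rewrite le_eqVlt => /predU1P[/esym A0|A_gt0].
  rewrite big1 ?mulr_ge0 ?powR_ge0 // => i Di.
  have /eqP := psumr_eq0P (fun i _ => cw_ge0 i) A0 Di.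
  by rewrite mulf_eq0 => /orP[]/eqP->; rewrite ?mul0r ?powR0 ?mulr0 ?gt_eqF.
pose K := (A / C) `^ q.
have -> : A `^ q * C `^ (1 - q) = K * C.
  rewrite powRB; last by apply/implyP => _; rewrite gt_eqF.
  rewrite powRr1 ?ltW // /K powRM ?invr_ge0 ?ltW //.
  by rewrite -[C^-1]powR_inv1 ?ltW // -powRrM mulN1r powRN mulrA mulrAC.
have -> : K * C = \sum_(i | D i) K * C * (q / A * (c i * w i) + (1 - q) / C * c i).
  rewrite -mulr_sumr big_split /= -!mulr_sumr -/A -/C.
  by field; rewrite !gt_eqF.
apply: ler_sum => i _.
have t_ge0 : 0 <= w i * C / A by rewrite divr_ge0 ?(mulr_ge0 (w_ge0 i)) ?ltW.
have -> : w i = A / C * (w i * C / A) by field; rewrite !gt_eqF.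
have AC_ge0 : 0 <= A / C by rewrite divr_ge0 ?ltW.
rewrite powRM // -/K.
have -> : K * C * (q / A * (c i * (A / C * (w i * C / A))) + (1 - q) / C * c i) =
          c i * K * (q * (w i * C / A) + (1 - q)) by field; rewrite !gt_eqF.
by rewrite mulrA ler_wpM2l ?mulr_ge0 ?powR_ge0 // powR_le_tangent1.
Qed.

End ConcavePower.

Section Hoelder.
Variables (R : realType) (s : nat) (EQ : {set {set 'I_s}}).

Lemma PQH_ge0 n (E : {set {set 'I_n}}) (x : 'I_n -> R) :
  (forall i, 0 <= x i) -> 0 <= PQH EQ E x.
Proof.
by move=> x_ge0; rewrite mulr_ge0 // sumr_ge0 // => I _; rewrite mulr_ge0 ?prodr_ge0.
Qed.

Lemma pnorm1_powR n (p : R) (x : 'I_n -> R) : 0 < p ->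
  pnorm p x = 1 -> pnorm 1 (fun i => `|x i| `^ p) = 1.
Proof.
rewrite pnorm1 /pnorm => p_gt0 x1.
under eq_bigr do rewrite ger0_norm ?powR_ge0 //.
have -> : \sum_i `|x i| `^ p = ((\sum_i `|x i| `^ p) `^ p^-1) `^ p.
  by rewrite -powRrM mulVf ?gt_eqF // powRr1 // sumr_ge0 // => i _; rewrite powR_ge0.
by rewrite x1 powR1.
Qed.

Lemma PQH_le_hoelder n (E : {set {set 'I_n}}) (x : 'I_n -> R) (p : R) : 1 <= p ->
  PQH EQ E x <=
  PQH EQ E (fun i => `|x i| `^ p) `^ p^-1 * (s`! * NQ EQ E)%:R `^ (1 - p^-1).
Proof.
move=> p_ge1; have p_gt0 : 0 < p by apply: lt_le_trans p_ge1.
set y := fun i => `|x i| `^ p.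
pose c (I : {set 'I_n}) : R := s`!%:R * (Ncount EQ I (induced E I))%:R.
pose w (I : {set 'I_n}) := \prod_(i in I) y i.
have PQH_norm : PQH EQ E (fun i => `|x i|) =
    \sum_(I : {set 'I_n} | #|I| == s) c I * w I `^ p^-1.
  rewrite /PQH mulr_sumr; apply: eq_bigr => I _; rewrite mulrA /w -prod_powR //.
    by congr (_ * _); apply: eq_bigr => i _; rewrite /y -powRrM mulfV ?gt_eqF // powRr1.
  by move=> i; apply: powR_ge0.
have PQH_y : PQH EQ E y = \sum_(I : {set 'I_n} | #|I| == s) c I * w I.
  by rewrite /PQH mulr_sumr; apply: eq_bigr => I _; rewrite mulrA.
have sum_c : \sum_(I : {set 'I_n} | #|I| == s) c I <= (s`! * NQ EQ E)%:R.
  by rewrite -mulr_sumr natrM ler_wpM2l // -natr_sum ler_nat sum_Ncount_induced_le.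
apply: le_trans (PQH_le_norm EQ E x) _; rewrite PQH_norm PQH_y.
apply: le_trans (sum_powR_le _ _ _ _) _.
- by rewrite invr_gt0 p_gt0 invf_le1.
- by move=> I; rewrite mulr_ge0.
- by move=> I; rewrite prodr_ge0 // => i _; apply: powR_ge0.
rewrite ler_wpM2l ?powR_ge0 //; apply: ge0_ler_powR => //.
- by rewrite subr_ge0 invf_le1.
- by rewrite nnegrE sumr_ge0 // => I _; rewrite mulr_ge0.
- by rewrite nnegrE.
Qed.

End Hoelder.

Theorem lemma3p13 (R : realType) (r s : nat) (EQ : {set {set 'I_s}})
  (P : property) :
  (2 <= r)%N -> (r <= s)%N -> uniform r EQ ->
  hereditary r P -> flat (R:=R) EQ P ->
  forall (p : R), 1 <= p ->
  forall (n : nat) (E : {set {set 'I_n}}), P n E -> (s <= n)%N ->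
  lamH EQ p E <=
    (piQ (R:=R) EQ P) `^ p^-1 * ((s`! * NQ EQ E)%:R) `^ (1 - p^-1).
Proof.
move=> r_ge2 r_le_s _ [_ _ P_add_isolated] flatP p p_ge1 n E PE s_le_n.
have n_gt0 : (0 < n)%N := leq_trans (leq_trans (ltnW r_ge2) r_le_s) s_le_n.
have p_gt0 : 0 < p by apply: lt_le_trans p_ge1.
apply: ge_sup; first exact: lamH_set_neq0.
move=> _ [x /= x1 <-]; apply: le_trans (PQH_le_hoelder EQ E x p_ge1) _.
have y_ge0 i : 0 <= `|x i| `^ p by apply: powR_ge0.
have PQH_y_le_piQ : PQH EQ E (fun i => `|x i| `^ p) <= piQ EQ P.
  rewrite -flatP; apply: le_trans _ (lamH1_le_lamP1 R EQ P_add_isolated n_gt0 PE).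
  exact/PQH_le_lamH1/pnorm1_powR.
rewrite ler_wpM2r ?powR_ge0 //; apply: ge0_ler_powR => //.
- by rewrite invr_ge0 ltW.
- by rewrite nnegrE PQH_ge0.
- by rewrite nnegrE (le_trans _ PQH_y_le_piQ) ?PQH_ge0.
Qed.
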